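(* Let $K\subset L\subset\mathbb{R}^2$ be convex compact sets with $\operatorname{vol}L>0$. Then for every unit vector $\bm u\in\mathbb{R}^2$, $$\frac{\operatorname{vol}P_{\bm u}K}{\operatorname{vol}P_{\bm u}L}\ \ge\ 1-\sqrt{1-\frac{\operatorname{vol}K}{\operatorname{vol}L}}.$$ The bound is tight: for every value $r\in[0,1]$ there exist such $K\subset L$ with $\operatorname{vol}K/\operatorname{vol}L=r$ and a direction $\bm u$ attaining equality.
   Context: $P_{\bm u}$ is the orthogonal projection onto the line orthogonal to $\bm u$; $\operatorname{vol}$ denotes area for subsets of $\mathbb{R}^2$ and length for subsets of a line. *)

From HB Require Import structures.
From mathcomp Require Import all_boot all_order all_algebra.
From mathcomp Require Import all_classical all_reals all_analysis.
Set Implicit Arguments. Unset Strict Implicit. Unset Printing Implicit Defensive.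
Import Order.TTheory GRing.Theory Num.Theory.
Import numFieldNormedType.Exports.
Local Open Scope classical_set_scope.
Local Open Scope ring_scope.

Definition convex2 {R : realType} (A : set (R * R)) : Prop :=
  forall x y, A x -> A y -> forall t : R, 0 <= t -> t <= 1 ->
    A (t * x.1 + (1 - t) * y.1, t * x.2 + (1 - t) * y.2).

Definition area {R : realType} (A : set (R * R)) : \bar R :=
  ((@lebesgue_measure R) \x (@lebesgue_measure R))%E A.

Definition len {R : realType} (A : set R) : \bar R := (@lebesgue_measure R) A.

Definition unit_vec {R : realType} (u : R * R) : Prop := u.1 ^+ 2 + u.2 ^+ 2 = 1.

(* P_u A: orthogonal projection of A onto the line orthogonal to u, identified
   isometrically with R via the coordinate along u^perp = (-u.2, u.1). *)
Definition proj_perp {R : realType} (u : R * R) (A : set (R * R)) : set R :=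
  [set u.1 * x.2 - u.2 * x.1 | x in A].

Definition vol_ratio {R : realType} (K L : set (R * R)) : R :=
  fine (area K) / fine (area L).

Definition proj_ratio {R : realType} (u : R * R) (K L : set (R * R)) : R :=
  fine (len (proj_perp u K)) / fine (len (proj_perp u L)).

(* Let [t0 < t1] be the extent of [L] along [u^perp], attained at [p0], [p1], and
   [a <= b] that of [K], and put [m = 1 - (b - a)/(t1 - t0)].  Cutting [L] by a
   suitable line [t = c] into [A0] and [A1], the homotheties of ratio [m] centred
   at [p0] and [p1] map [A0] and [A1] into the parts of [L] below [a] and above
   [b]; by convexity these images stay in [L] and miss [K].  Hence
   [vol K + m^2 vol L <= vol L], i.e. [m <= sqrt (1 - vol K / vol L)].  Equality
   holds for a triangle [L] cut by a line parallel to a side: the removed cap is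
   homothetic to [L]. *)
From HB Require Import structures.
From mathcomp Require Import all_boot all_order all_algebra.
From mathcomp Require Import all_classical all_reals all_analysis.
From mathcomp Require Import measurable_realfun ring lra.
Set Implicit Arguments. Unset Strict Implicit. Unset Printing Implicit Defensive.
Import Order.TTheory GRing.Theory Num.Theory.
Import numFieldNormedType.Exports.
Local Open Scope classical_set_scope.
Local Open Scope ring_scope.

Section plane_measure.
Context {R : realType}.
Local Notation mu := (@lebesgue_measure R).

Let affine (c k : R) (x : measurableTypeR R) : measurableTypeR R := c + k * x.

Let measurable_affine c k : measurable_fun setT (affine c k).
Proof. by apply: measurable_funD => //; exact: measurable_funM. Qed.

Lemma lebesgue_measure_affine_preimage (c k : R) (A : set R) : 0 < k ->
  measurable A -> mu (affine c k @^-1` A) = ((k^-1)%:E * mu A)%E.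
Proof.
move=> k0 mA.
(* [k] times the pushforward of [mu] agrees with [mu] on intervals, hence everywhere. *)
suff -> : mu A = (k%:E * mu (affine c k @^-1` A))%E.
  by rewrite muleA -EFinM mulVf ?gt_eqF // mul1e.
have := @lebesgue_measure_unique R
  (mscale (NngNum (ltW k0)) (@pushforward _ _ _ _ R mu (affine c k))).
move=> /(_ (measurable_affine c k)) -> //.
move=> _ [[a b]] _ <-; rewrite /= /mscale /= /pushforward.
have -> : affine c k @^-1` `]a, b]%classic = `](a - c) / k, (b - c) / k]%classic.
  apply/seteqP; split => x /=;
    rewrite /affine !in_itv /= ?ler_pdivlMr ?ltr_pdivrMr ?ltr_pdivlMr ?ler_pdivrMr //.
    by move=> /andP[ax xb]; apply/andP; split; rewrite mulrC; lra.
  by move=> /andP[ax xb]; apply/andP; split; rewrite mulrC in ax xb; lra.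
rewrite !lebesgue_measure_itv /= !lte_fin ltr_pM2r ?invr_gt0 // ltrD2r.
case: ifP => _; last by rewrite mule0.
by rewrite -EFinB -EFinM; congr (_%:E); field; rewrite gt_eqF.
Qed.

Lemma area_affine_preimage (c1 c2 k : R) (A : set (R * R)) : 0 < k -> measurable A ->
  area [set z | A (c1 + k * z.1, c2 + k * z.2)] = ((k ^- 2)%:E * area A)%E.
Proof.
(* Integrate the lengths of the vertical sections, rescaling both variables. *)
move=> k0 mA; rewrite expr2 invfM EFinM -muleA /area /product_measure1 /=.
pose f := mu \o xsection A.
have mf : measurable_fun setT f by exact: measurable_fun_xsection.
have ki : 0 <= k^-1 by rewrite invr_ge0 ltW.
transitivity (\int[mu]_x ((k^-1)%:E * f (affine c1 k x)))%E.
  apply: eq_integral => x _ /=.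
  rewrite /f /= -(lebesgue_measure_affine_preimage c2 k0); last exact: measurable_xsection.
  by congr (mu _); apply/seteqP; split => y /=; rewrite /xsection /affine /= !inE.
rewrite ge0_integralZl_EFin //; last exact: measurableT_comp mf (measurable_affine c1 k).
congr (_ * _)%E.
have := @ge0_integral_pushforward _ _ _ _ R _ (measurable_affine c1 k) mu setT f
  measurableT mf.
rewrite preimage_setT => <-; last by move=> y _; exact: measure_ge0.
rewrite (eq_measure_integral (mscale (NngNum ki) mu)).
- by apply: ge0_integral_mscale => // y _; exact: measure_ge0.
- by move=> B mB _; exact: lebesgue_measure_affine_preimage.
Qed.

Lemma open_measurable_plane (U : set (R * R)) : open U -> measurable U.
Proof.
(* [U] is the countable union of the rational open boxes it contains. *)
move=> oU.
pose box (q : rat * rat * rat * rat) : set (R * R) :=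
  `](ratr q.1.1.1 : R), ratr q.1.1.2[ `*` `](ratr q.1.2 : R), ratr q.2[.
pose F q := if pselect (box q `<=` U) then box q else set0.
have -> : U = \bigcup_q F q.
  apply/seteqP; split; last first.
    by move=> z [q _]; rewrite /F; case: pselect => // h; exact: h.
  move=> z Uz.
  have /nbhs_ballP [e /= e0 ezU] : nbhs z U by rewrite openE in oU; exact: oU.
  have [q1] := @rat_in_itvoo R (z.1 - e) z.1 ltac:(lra).
  have [q2] := @rat_in_itvoo R z.1 (z.1 + e) ltac:(lra).
  have [q3] := @rat_in_itvoo R (z.2 - e) z.2 ltac:(lra).
  have [q4] := @rat_in_itvoo R z.2 (z.2 + e) ltac:(lra).
  rewrite !in_itv /= => /andP[h4 h4'] /andP[h3 h3'] /andP[h2 h2'] /andP[h1 h1'].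
  have sub : box (q1, q2, q3, q4) `<=` U.
    move=> w [/=]; rewrite !in_itv /= => /andP[w1 w1'] /andP[w2 w2'].
    apply: ezU; split => /=; rewrite -ball_normE /ball_ /= ltr_norml;
      apply/andP; split; lra.
  exists (q1, q2, q3, q4) => //; rewrite /F; case: pselect => [bq|/(_ sub)//].
  by split; rewrite /= in_itv /=; apply/andP; split.
apply: countable_bigcupT_measurable; first exact: countableP.
move=> q; rewrite /F; case: pselect => [bq|nbq]; last exact: measurable0.
by apply: measurableX; exact: measurable_itv.
Qed.

Lemma closed_measurable_plane (A : set (R * R)) : closed A -> measurable A.
Proof. by move/closed_openC/open_measurable_plane/measurableC; rewrite setCK. Qed.

Lemma compact_measurable_plane (A : set (R * R)) : compact A -> measurable A.
Proof. by move/(compact_closed (@norm_hausdorff _ _))/closed_measurable_plane. Qed.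

Lemma area_ge0 (A : set (R * R)) : (0 <= area A)%E.
Proof. exact: measure_ge0. Qed.

Lemma le_area (A B : set (R * R)) : measurable A -> measurable B -> A `<=` B ->
  (area A <= area B)%E.
Proof. by move=> mA mB AB; apply: le_measure => //; rewrite inE. Qed.

Lemma areaU (A B : set (R * R)) : measurable A -> measurable B -> A `&` B = set0 ->
  area (A `|` B) = (area A + area B)%E.
Proof. by move=> mA mB AB; rewrite /area measureU. Qed.

End plane_measure.

Section perp_coord_theory.
Context {R : realType}.
Implicit Types (u z p : R * R) (A : set (R * R)).

Definition perp_coord u z : R := u.1 * z.2 - u.2 * z.1.

Lemma proj_perpE u A : proj_perp u A = perp_coord u @` A.
Proof. by []. Qed.

Lemma continuous_perp_coord u : continuous (perp_coord u).
Proof.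
by move=> z; apply: cvgB; apply: cvgM; exact: cvg_cst || exact: cvg_snd || exact: cvg_fst.
Qed.

Lemma measurable_perp_coord_preimage u (B : set R) : measurable B ->
  measurable (perp_coord u @^-1` B).
Proof.
have mf : measurable_fun setT (perp_coord u).
  by apply: measurable_funB; apply: measurable_funM => //;
    exact: measurable_snd || exact: measurable_fst.
by move=> mB; rewrite -[_ @^-1` _]setTI; exact: mf.
Qed.

Lemma measurable_halfplane_lt u c : measurable [set z | perp_coord u z < c].
Proof.
by apply: (measurable_perp_coord_preimage u (B := [set x | x < c]));
  exact: open_measurable (@open_lt _ c).
Qed.

Lemma measurable_halfplane_gt u c : measurable [set z | c < perp_coord u z].
Proof.
by apply: (measurable_perp_coord_preimage u (B := [set x | c < x]));
  exact: open_measurable (@open_gt _ c).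
Qed.

Lemma measurable_halfplane_ge u c : measurable [set z | c <= perp_coord u z].
Proof.
by apply: (measurable_perp_coord_preimage u (B := [set x | c <= x]));
  exact: closed_measurable (@closed_ge _ c).
Qed.

Lemma measurable_line u c : measurable [set z | perp_coord u z = c].
Proof.
by apply: (measurable_perp_coord_preimage u (B := [set c])); exact: measurable_set1.
Qed.

Lemma area_line u c : u != 0 -> area [set z | perp_coord u z = c] = 0%E.
Proof.
move=> u0; have [u10|u10] := eqVneq u.1 0.
  have u20 : u.2 != 0.
    by apply: contraNneq u0 => u20; rewrite [u]surjective_pairing u10 u20.
  have -> : [set z | perp_coord u z = c] = [set - c / u.2] `*` [set: R].
    apply/seteqP; split => z /=; rewrite /perp_coord u10 mul0r sub0r.
      by move=> <-; split => //=; field.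
    by move=> [/= -> _]; field.
  rewrite /area product_measure1E //.
  by rewrite [X in (X * _)%E]lebesgue_measure_set1 mul0e.
rewrite /area /product_measure1 /=; apply: integral0_eq => x _ /=.
have -> : xsection [set z | perp_coord u z = c] x = [set (c + u.2 * x) / u.1].
  apply/seteqP; split => y /=; rewrite /xsection /= inE /perp_coord /=.
    by move=> <-; field.
  by move=> ->; field.
exact: lebesgue_measure_set1.
Qed.

Lemma area_halfplane_ge u c A : u != 0 -> measurable A ->
  area (A `&` [set z | c <= perp_coord u z]) =
  area (A `&` [set z | c < perp_coord u z]).
Proof.
move=> u0 mA.
have mAc : measurable (A `&` [set z | perp_coord u z = c]).
  exact: measurableI (measurable_line _ _).
have -> : A `&` [set z | c <= perp_coord u z] =
    (A `&` [set z | c < perp_coord u z]) `|` (A `&` [set z | perp_coord u z = c]).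
  apply/seteqP; split => z /=; last by move=> [[Az /ltW]|[Az ->]].
  by move=> [Az]; rewrite le_eqVlt => /orP[/eqP->|]; [right|left].
rewrite areaU //.
- suff -> : area (A `&` [set z | perp_coord u z = c]) = 0%E by rewrite adde0.
  apply/eqP; rewrite eq_le area_ge0 andbT -(area_line c u0).
  by apply: (le_area mAc (measurable_line u c)) => z [].
- exact: measurableI (measurable_halfplane_gt _ _).
- by apply/seteqP; split => // z [[_ /= lt_cz] [_ /= eq_zc]]; move: lt_cz;
    rewrite eq_zc ltxx.
Qed.

Lemma area_split_halfplanes u c A : u != 0 -> measurable A ->
  area A = (area (A `&` [set z | (perp_coord u z < c)%R]) +
            area (A `&` [set z | (c < perp_coord u z)%R]))%E.
Proof.
move=> u0 mA; rewrite -area_halfplane_ge // -areaU.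
- by congr area; apply/seteqP; split => [z Az|z [[]|[]]//];
    case: (ltP (perp_coord u z) c); [left|right].
- exact: measurableI (measurable_halfplane_lt _ _).
- exact: measurableI (measurable_halfplane_ge _ _).
- by apply/seteqP; split => // z [[_ /= +] [_ /= +]] => /lt_le_trans/[apply];
    rewrite ltxx.
Qed.

End perp_coord_theory.

Lemma compact_min_max_points {R : realType} {T : topologicalType} (A : set T)
    (f : T -> R) :
  continuous f -> A !=set0 -> compact A ->
  exists p0 p1, [/\ A p0, A p1 & forall x, A x -> f p0 <= f x <= f p1].
Proof.
move=> cf A0 cA.
have [p1 /set_mem Ap1 max_p1] := compact_EVT_max A0 cA (continuous_subspaceT cf).
have cNf : continuous (fun x => - f x) by move=> x; apply: cvgN; exact: cf.
have [p0 /set_mem Ap0 min_p0] := compact_EVT_max A0 cA (continuous_subspaceT cNf).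
exists p0, p1; split => // x Ax; apply/andP; split.
  by rewrite -lerN2; apply: min_p0; exact: mem_set.
by apply: max_p1; exact: mem_set.
Qed.

Section convex_projection.
Context {R : realType}.
Variables (u p0 p1 : R * R) (A : set (R * R)).
Hypotheses (cvxA : convex2 A) (Ap0 : A p0) (Ap1 : A p1).
Hypothesis extremal : forall z, A z -> perp_coord u p0 <= perp_coord u z <= perp_coord u p1.

Lemma proj_perp_convex : proj_perp u A = `[perp_coord u p0, perp_coord u p1]%classic.
Proof.
rewrite proj_perpE; apply/seteqP; split.
  by move=> _ [z Az <-]; rewrite /= in_itv /=; exact: extremal.
move=> t; rewrite /= in_itv /= => /andP[t0 t1].
have [e01|ne01] := eqVneq (perp_coord u p0) (perp_coord u p1).
  by exists p0 => //; apply/eqP; rewrite eq_le t0 e01 t1.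
have lt01 : perp_coord u p0 < perp_coord u p1 by rewrite lt_neqAle ne01 (le_trans t0 t1).
set th := (t - perp_coord u p0) / (perp_coord u p1 - perp_coord u p0).
have th0 : 0 <= th by apply: divr_ge0; lra.
have th1 : th <= 1 by rewrite ler_pdivrMr ?mul1r; lra.
exists (th * p1.1 + (1 - th) * p0.1, th * p1.2 + (1 - th) * p0.2); first exact: cvxA.
move: ne01; rewrite /th /perp_coord /= => ne01.
by field; rewrite subr_eq0 eq_sym.
Qed.

Lemma len_proj_perp_convex :
  len (proj_perp u A) = (perp_coord u p1 - perp_coord u p0)%:E.
Proof.
rewrite proj_perp_convex /len lebesgue_measure_itv /= lte_fin.
have /andP[le01 _] := extremal Ap1.
case: ifPn => [_|]; first by rewrite EFinB.
rewrite -leNgt => le10.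
have -> : perp_coord u p1 = perp_coord u p0 by apply/eqP; rewrite eq_le le10 le01.
by rewrite subrr.
Qed.

End convex_projection.

Section homothety.
Context {R : realType}.
Implicit Types (u p z : R * R) (A : set (R * R)).

Definition homothety_pt p (k : R) z : R * R :=
  (p.1 + k * (z.1 - p.1), p.2 + k * (z.2 - p.2)).

(* The image of [A] under [homothety_pt p m], as a preimage under the inverse map. *)
Definition homothety p (m : R) A : set (R * R) := homothety_pt p m^-1 @^-1` A.

Lemma homothety_ptK p m z : m != 0 -> homothety_pt p m (homothety_pt p m^-1 z) = z.
Proof. by move=> m0; case: z => z1 z2; rewrite /homothety_pt /=; congr (_, _); field. Qed.

Lemma perp_coord_homothety_pt u p k z : perp_coord u (homothety_pt p k z) =
  perp_coord u p + k * (perp_coord u z - perp_coord u p).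
Proof. by rewrite /perp_coord /=; ring. Qed.

Lemma convex2_homothety_pt A p k z : convex2 A -> A p -> A z -> 0 <= k <= 1 ->
  A (homothety_pt p k z).
Proof.
move=> cvxA Ap Az /andP[k0 k1].
have -> : homothety_pt p k z = (k * z.1 + (1 - k) * p.1, k * z.2 + (1 - k) * p.2).
  by rewrite /homothety_pt; congr (_, _); ring.
exact: cvxA.
Qed.

Lemma measurable_homothety p m A : measurable A -> measurable (homothety p m A).
Proof.
have mh : measurable_fun setT (homothety_pt p m^-1).
  apply/measurable_fun_pairP; split => /=.
  - exact: measurable_funD _ (measurable_funM _ (measurable_funB measurable_fst _)).
  - exact: measurable_funD _ (measurable_funM _ (measurable_funB measurable_snd _)).
by move=> mA; rewrite -[homothety _ _ _]setTI; exact: mh.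
Qed.

Lemma area_homothety p m A : 0 < m -> measurable A ->
  area (homothety p m A) = ((m ^+ 2)%:E * area A)%E.
Proof.
move=> m0 mA.
have -> : homothety p m A =
    [set z | A ((p.1 - m^-1 * p.1) + m^-1 * z.1, (p.2 - m^-1 * p.2) + m^-1 * z.2)].
  by apply: eq_set => z; congr (A (_, _)); ring.
by rewrite area_affine_preimage ?invr_gt0 // -exprVn invrK.
Qed.

Lemma area_homothety_halfplane_le u p m c A :
  convex2 A -> measurable A -> A p -> 0 <= m <= 1 ->
  ((m ^+ 2)%:E * area (A `&` [set z | (perp_coord u z < c)%R]) <=
   area (A `&` [set z | (perp_coord u z <
                         perp_coord u p + m * (c - perp_coord u p))%R]))%E.
Proof.
move=> cvxA mA Ap m01; have [m0|m_neq0] := eqVneq m 0.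
  by rewrite m0 expr2 mul0r mul0e; exact: area_ge0.
have m_gt0 : 0 < m by rewrite lt_neqAle eq_sym m_neq0 (andP m01).1.
rewrite -(area_homothety p) //; last exact: measurableI (measurable_halfplane_lt _ _).
apply: le_area.
- apply: measurable_homothety; exact: measurableI (measurable_halfplane_lt _ _).
- exact: measurableI (measurable_halfplane_lt _ _).
move=> z [/= Aw lt_wc]; rewrite -(homothety_ptK p z m_neq0).
split; first exact: convex2_homothety_pt.
by rewrite /= perp_coord_homothety_pt ltrD2l ltr_pM2l // ltrD2r.
Qed.

End homothety.

Section slab.
Context {R : realType}.
Implicit Types (u p z : R * R) (A : set (R * R)).

Lemma perp_coordN u z : perp_coord (- u) z = - perp_coord u z.
Proof. by rewrite /perp_coord /=; ring. Qed.

Lemma halfplaneN u d : [set z | perp_coord (- u) z < d] = [set z | - d < perp_coord u z].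
Proof. by apply: eq_set => z; rewrite perp_coordN ltrNl. Qed.

Lemma perp_coord_width_gt0 u p0 p1 L : u != 0 -> measurable L -> (0 < area L)%E ->
  (forall z, L z -> perp_coord u p0 <= perp_coord u z <= perp_coord u p1) ->
  perp_coord u p0 < perp_coord u p1.
Proof.
move=> u_neq0 mL L_gt0 extremal; rewrite ltNge; apply/negP => le10.
have : (area L <= area [set z | perp_coord u z = perp_coord u p0])%E.
  apply: le_area => // [|z Lz]; first exact: measurable_line.
  by have /andP[le0 le1] := extremal _ Lz; apply/eqP; rewrite eq_le le0 (le_trans le1).
by rewrite area_line // leNgt L_gt0.
Qed.

Lemma area_slab_complement_le u a b K L :
  measurable L -> measurable K -> K `<=` L ->
  (forall z, K z -> a <= perp_coord u z <= b) -> a <= b ->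
  (area K + area (L `&` [set z | (perp_coord u z < a)%R]) +
   area (L `&` [set z | (b < perp_coord u z)%R]) <= area L)%E.
Proof.
move=> mL mK KL K_slab ab.
set B0 := L `&` _; set B1 := L `&` _.
have mB0 : measurable B0 by exact: measurableI (measurable_halfplane_lt _ _).
have mB1 : measurable B1 by exact: measurableI (measurable_halfplane_gt _ _).
have KB0 : K `&` B0 = set0.
  by apply/seteqP; split => // z [Kz [_ /=]]; rewrite ltNge (andP (K_slab _ Kz)).1.
have KB01 : (K `|` B0) `&` B1 = set0.
  apply/seteqP; split => // z [[Kz|[_ /= za]] [_ /= bz]].
    by move: bz; rewrite ltNge (andP (K_slab _ Kz)).2.
  by move: (lt_trans za (le_lt_trans ab bz)); rewrite ltxx.
rewrite -areaU // -areaU //; last exact: measurableU.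
apply: le_area => //; first by do 2 apply: measurableU => //.
by move=> z [[/KL|[]]|[]].
Qed.

Lemma area_slab_le u p0 p1 a b K L :
  convex2 L -> measurable L -> measurable K -> K `<=` L -> L p0 -> L p1 ->
  (forall z, K z -> a <= perp_coord u z <= b) ->
  perp_coord u p0 <= a -> a <= b -> b <= perp_coord u p1 ->
  perp_coord u p0 < perp_coord u p1 ->
  (area K + ((1 - (b - a) / (perp_coord u p1 - perp_coord u p0)) ^+ 2)%:E * area L
    <= area L)%E.
Proof.
move=> cvxL mL mK KL Lp0 Lp1 K_slab t0a ab bt1 t01.
set t0 := perp_coord u p0 in t0a t01 *; set t1 := perp_coord u p1 in bt1 t01 *.
set m := 1 - _.
have u_neq0 : u != 0.
  by apply: contraTneq t01 => u0; rewrite /t0 /t1 u0 /perp_coord /= !mul0r subrr ltxx.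
have mE : m * (t1 - t0) = (a - t0) + (t1 - b).
  by rewrite /m mulrBl mul1r divfK ?subr_eq0 ?gt_eqF //; lra.
clearbody m.
have m01 : 0 <= m <= 1 by apply/andP; split; nra.
(* The homotheties of ratio [m] centred at [p0] and [p1] send the line [t = c]
   to the lines [t = a] and [t = b] respectively. *)
pose c := t0 + (a - t0) / m.
have ha : t0 + m * (c - t0) = a.
  have [m0|m_neq0] := eqVneq m 0; last by rewrite /c; field.
  by rewrite m0 mul0r in mE *; lra.
have hb : - (perp_coord (- u) p1 + m * (- c - perp_coord (- u) p1)) = b.
  by rewrite perp_coordN -/t1; lra.
have lower := area_homothety_halfplane_le u c cvxL mL Lp0 m01.
have upper := area_homothety_halfplane_le (- u) (- c) cvxL mL Lp1 m01.
rewrite ha in lower; rewrite !halfplaneN opprK hb in upper.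
apply: (le_trans _ (area_slab_complement_le mL mK KL K_slab ab)).
rewrite (area_split_halfplanes c u_neq0 mL).
rewrite (ge0_muleDr _ (area_ge0 _) (area_ge0 _)) -(addeA (area K)).
by apply: leeD2l; exact: leeD.
Qed.

End slab.

Lemma sqrt_ratio_bound {R : rcfType} (x y q : R) : q <= 1 -> 0 < y ->
  x + (1 - q) ^+ 2 * y <= y -> 1 - Num.sqrt (1 - x / y) <= q.
Proof.
move=> q1 y0 hxy.
have key : (1 - q) ^+ 2 <= 1 - x / y.
  by rewrite -(ler_pM2r y0) mulrBl mul1r mulfVK ?gt_eqF //; lra.
have q0 : 0 <= 1 - q by rewrite subr_ge0.
rewrite lerBlDr -lerBlDl -[1 - q](ger0_norm q0) -sqrtr_sqr ler_sqrt //.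
exact: le_trans (sqr_ge0 _) key.
Qed.

Section projection_bound.
Context {R : realType}.

Lemma proj_ratio_ge0 (u : R * R) (K L : set (R * R)) : 0 <= proj_ratio u K L.
Proof. by rewrite /proj_ratio divr_ge0 // fine_ge0 // measure_ge0. Qed.

Lemma proj_ratio_ge (K L : set (R * R)) (u : R * R) :
  convex2 K -> compact K -> convex2 L -> compact L -> K `<=` L ->
  (0 < area L)%E -> unit_vec u ->
  1 - Num.sqrt (1 - vol_ratio K L) <= proj_ratio u K L.
Proof.
move=> cvxK cptK cvxL cptL KL L_gt0 unit_u.
have mK := compact_measurable_plane cptK; have mL := compact_measurable_plane cptL.
have u_neq0 : u != 0.
  apply/eqP => u0; move: unit_u; rewrite /unit_vec u0 /= expr2 mulr0 addr0.
  by move/esym/eqP; rewrite oner_eq0.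
(* Junk value: [fine +oo = 0], so [vol_ratio K L = 0]. *)
have [Linf|Lfin] := eqVneq (area L) +oo%E.
  by rewrite /vol_ratio Linf /= invr0 mulr0 subr0 sqrtr1 subrr proj_ratio_ge0.
rewrite -ltey -ge0_fin_numE ?area_ge0 // in Lfin.
have [K0|/set0P K_neq0] := eqVneq K set0.
  by rewrite /vol_ratio K0 /area measure0 /= mul0r subr0 sqrtr1 subrr proj_ratio_ge0.
have L_neq0 : L !=set0 by case: K_neq0 => z /KL Lz; exists z.
have [p0 [p1 [Lp0 Lp1 extL]]] :=
  compact_min_max_points (@continuous_perp_coord _ u) L_neq0 cptL.
have [q0 [q1 [Kq0 Kq1 extK]]] :=
  compact_min_max_points (@continuous_perp_coord _ u) K_neq0 cptK.
have t01 := perp_coord_width_gt0 u_neq0 mL L_gt0 extL.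
have /andP[t0a _] := extL _ (KL _ Kq0); have /andP[_ bt1] := extL _ (KL _ Kq1).
have /andP[ab _] := extK _ Kq1.
have Kfin : area K \is a fin_num.
  rewrite ge0_fin_numE ?area_ge0 //; apply: le_lt_trans (le_area mK mL KL) _.
  by rewrite -ge0_fin_numE ?area_ge0.
have := area_slab_le cvxL mL mK KL Lp0 Lp1 extK t0a ab bt1 t01.
rewrite -(fineK Kfin) -(fineK Lfin) -EFinM -EFinD lee_fin => slab.
rewrite /proj_ratio (len_proj_perp_convex cvxK Kq0 Kq1 extK).
rewrite (len_proj_perp_convex cvxL Lp0 Lp1 extL) /=.
apply: sqrt_ratio_bound slab; last by rewrite -lte_fin fineK.
by rewrite ler_pdivrMr ?subr_gt0 // mul1r; lra.
Qed.

End projection_bound.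

Section extremal_example.
Context {R : realType}.

Let e : R * R := (0, -1).

Let perp_coord_e z : perp_coord e z = z.1.
Proof. by rewrite /perp_coord /=; ring. Qed.

Let e_neq0 : e != 0.
Proof. by apply/eqP => /(congr1 snd)/eqP; rewrite /= oppr_eq0 oner_eq0. Qed.

Lemma closed_sublevel (f : R * R -> R) c : continuous f -> closed [set z | f z <= c].
Proof.
move=> cf; rewrite (_ : [set z | f z <= c] = f @^-1` [set x | x <= c]) //.
by apply: preimage_closed; [move=> z _; exact: cf | exact: closed_le].
Qed.

Lemma area_setX_itvcc (a b c d : R) : a <= b -> c <= d ->
  area (`[a, b]%classic `*` `[c, d]%classic) = ((b - a) * (d - c))%:E.
Proof.
move=> ab cd; rewrite /area product_measure1E //.
change (lebesgue_measure `[a, b]%classic * lebesgue_measure `[c, d]%classic =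
  ((b - a) * (d - c))%:E)%E.
rewrite !lebesgue_measure_itv /= !lte_fin.
case: ifPn => [_|]; last first.
  by rewrite -leNgt => ba; rewrite (@le_anti _ _ b a) ?ba // subrr mul0r mul0e.
case: ifPn => [_|]; last first.
  by rewrite -leNgt => dc; rewrite (@le_anti _ _ d c) ?dc // subrr mulr0 mule0.
by rewrite -!EFinD -EFinM.
Qed.

Definition std_triangle : set (R * R) :=
  (`[0, 1]%classic `*` `[0, 1]%classic) `&` [set z | z.1 + z.2 <= 1].

Lemma std_triangleP z : std_triangle z <-> [/\ 0 <= z.1, 0 <= z.2 & z.1 + z.2 <= 1].
Proof.
rewrite /std_triangle /= !in_itv /=; split; first by move=> [[/andP[? ?] /andP[? ?]] ?].
by move=> [z1 z2 z12]; split => //; split; apply/andP; split => //; lra.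
Qed.

Lemma compact_std_triangle : compact std_triangle.
Proof.
apply: compact_closedI; first by apply: compact_setX; exact: segment_compact.
by apply: closed_sublevel => z; apply: cvgD; [exact: cvg_fst | exact: cvg_snd].
Qed.

Lemma convex2_std_triangle : convex2 std_triangle.
Proof.
move=> x y /std_triangleP[x1 x2 x12] /std_triangleP[y1 y2 y12] t t0 t1.
by apply/std_triangleP; split => /=; nra.
Qed.

Lemma area_std_triangle_gt0 : (0 < area std_triangle)%E.
Proof.
apply: (@lt_le_trans _ _ (area (`[0, 1/2]%classic `*` `[0, 1/2]%classic))).
  by rewrite area_setX_itvcc ?lte_fin ?mulr_gt0 //; lra.
apply: le_area; first by apply: measurableX; exact: measurable_itv.
  exact: compact_measurable_plane compact_std_triangle.
move=> z [] /=; rewrite !in_itv /= => /andP[? ?] /andP[? ?].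
by apply/std_triangleP; split; lra.
Qed.

Lemma area_std_triangle_fin_num : area std_triangle \is a fin_num.
Proof.
rewrite ge0_fin_numE ?area_ge0 //.
apply: (@le_lt_trans _ _ (area (`[0, 1]%classic `*` `[0, 1]%classic))).
  apply: le_area => [||z []//]; last by apply: measurableX; exact: measurable_itv.
  exact: compact_measurable_plane compact_std_triangle.
by rewrite area_setX_itvcc ?ltry //; lra.
Qed.

(* The cap of [std_triangle] beyond the line [x = 1 - m] is its image by the
   homothety of centre [(1, 0)] and ratio [m]. *)
Lemma area_std_triangle_cap m : 0 <= m <= 1 ->
  area (std_triangle `&` [set z | 1 - m <= perp_coord e z]) =
  ((m ^+ 2)%:E * area std_triangle)%E.
Proof.
move=> /andP[m0 m1]; have mT := compact_measurable_plane compact_std_triangle.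
have [->|m_neq0] := eqVneq m 0.
  rewrite expr2 mul0r mul0e subr0; apply/eqP; rewrite eq_le area_ge0 andbT.
  rewrite -(area_line 1 e_neq0).
  apply: le_area => //; first exact: measurableI (measurable_halfplane_ge _ _).
    exact: measurable_line.
  move=> z [/std_triangleP[_ z2 z12]]; rewrite /= !perp_coord_e => z1.
  by apply/eqP; rewrite eq_le z1 andbT; lra.
have m_gt0 : 0 < m by rewrite lt_neqAle eq_sym m_neq0.
have T10 : std_triangle (1, 0) by apply/std_triangleP; split; rewrite /= ?addr0.
rewrite -(area_homothety (1, 0)) //; congr area; apply/seteqP; split => z; last first.
  move=> Tw; rewrite -(homothety_ptK (1, 0) z m_neq0).
  split; first by apply: (convex2_homothety_pt convex2_std_triangle T10 Tw); apply/andP.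
  case/std_triangleP: Tw => w1 _ _; set w := homothety_pt _ m^-1 z in w1 *; clearbody w.
  by rewrite /= perp_coord_homothety_pt !perp_coord_e /=; nra.
move=> [/std_triangleP[z1 z2 z12]]; rewrite /= perp_coord_e => zm.
have k0 : 0 < m^-1 by rewrite invr_gt0.
have km : m^-1 * m = 1 by rewrite mulVf.
by apply/std_triangleP; rewrite /homothety_pt /=; split; nra.
Qed.

Lemma proj_ratio_extremal (r : R) : 0 <= r -> r <= 1 ->
  exists (K L : set (R * R)) (u : R * R),
    [/\ convex2 K, compact K, convex2 L, compact L & K `<=` L] /\
    (0 < area L)%E /\ unit_vec u /\ vol_ratio K L = r /\
    proj_ratio u K L = 1 - Num.sqrt (1 - vol_ratio K L).
Proof.
move=> r0 r1; pose m := Num.sqrt (1 - r).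
have m0 : 0 <= m by exact: sqrtr_ge0.
have m1 : m <= 1 by rewrite /m -[X in _ <= X]sqrtr1 ler_sqrt //; lra.
have mm : m ^+ 2 = 1 - r by rewrite sqr_sqrtr //; lra.
pose L := std_triangle; pose K := L `&` [set z | perp_coord e z <= 1 - m].
have mL : measurable L := compact_measurable_plane compact_std_triangle.
have cptK : compact K.
  exact: compact_closedI compact_std_triangle (closed_sublevel (@continuous_perp_coord _ e)).
have mK := compact_measurable_plane cptK.
have cvxK : convex2 K.
  move=> x y [Lx xs] [Ly ys] t t0 t1; split; first exact: convex2_std_triangle.
  by rewrite /= !perp_coord_e /= in xs ys *; nra.
have areaL : area L = (area K + (m ^+ 2)%:E * area L)%E.
  rewrite -area_std_triangle_cap ?m0 // area_halfplane_ge // -areaU //.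
  - congr area; apply/seteqP; split => [z Lz|z [[]|[]]//].
    by case: (leP (perp_coord e z) (1 - m)); [left|right].
  - exact: measurableI (measurable_halfplane_gt _ _).
  - apply/seteqP; split => // z [[_ /= le_zm] [_ /= lt_mz]].
    by move: (le_lt_trans le_zm lt_mz); rewrite ltxx.
have Lfin := @area_std_triangle_fin_num.
have Kfin : area K \is a fin_num.
  rewrite ge0_fin_numE ?area_ge0 //; apply: le_lt_trans (le_area mK mL (@subIsetl _ _ _)) _.
  by rewrite -ge0_fin_numE ?area_ge0.
have L_gt0 : 0 < fine (area L) by rewrite -lte_fin fineK // area_std_triangle_gt0.
rewrite -(fineK Kfin) -(fineK Lfin) -EFinM -EFinD in areaL.
have {}areaL := EFin_inj areaL.
have vol : vol_ratio K L = r.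
  by rewrite /vol_ratio (_ : fine (area K) = r * fine (area L)) ?mulfK ?gt_eqF //; nra.
have L00 : L (0, 0) by apply/std_triangleP; split; rewrite /= ?addr0.
have L10 : L (1, 0) by apply/std_triangleP; split; rewrite /= ?addr0.
have Ks0 : K (1 - m, 0).
  by split; [apply/std_triangleP; split; rewrite /= ?addr0; lra | rewrite /= perp_coord_e].
have extK z : K z -> perp_coord e (0, 0) <= perp_coord e z <= perp_coord e (1 - m, 0).
  by move=> [/std_triangleP[z1 _ _]]; rewrite /= !perp_coord_e /= => ->; rewrite andbT.
have extL z : L z -> perp_coord e (0, 0) <= perp_coord e z <= perp_coord e (1, 0).
  by move=> /std_triangleP[z1 z2 z12]; rewrite !perp_coord_e /=; apply/andP; split; lra.
exists K, L, e; split; first by split => //;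
  [exact: convex2_std_triangle | exact: compact_std_triangle | exact: subIsetl].
split; first exact: area_std_triangle_gt0.
split; first by rewrite /unit_vec /= sqrrN expr1n expr2 mul0r add0r.
split => //; rewrite vol /proj_ratio.
rewrite (len_proj_perp_convex cvxK _ Ks0 extK) ?(len_proj_perp_convex convex2_std_triangle L00 L10 extL) /=.
  by rewrite !perp_coord_e /= !subr0 divr1.
by split; [exact: L00 | rewrite /= perp_coord_e /=; lra].
Qed.

End extremal_example.

Theorem proposition10 (R : realType) :
  (forall (K L : set (R * R)) (u : R * R),
      convex2 K -> compact K -> convex2 L -> compact L -> K `<=` L ->
      (0 < area L)%E -> unit_vec u ->
      1 - Num.sqrt (1 - vol_ratio K L) <= proj_ratio u K L)
  /\
  (forall r : R, 0 <= r -> r <= 1 ->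
     exists (K L : set (R * R)) (u : R * R),
      [/\ convex2 K, compact K, convex2 L, compact L & K `<=` L] /\
      (0 < area L)%E /\ unit_vec u /\ vol_ratio K L = r /\
      proj_ratio u K L = 1 - Num.sqrt (1 - vol_ratio K L)).
Proof. by split; [exact: proj_ratio_ge | exact: proj_ratio_extremal]. Qed.
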